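(* Let $\gamma_a,\gamma_s>0$, $\lambda\ge0$, $q>0$, $\sigma_B>0$, $\varepsilon_a\in(0,2)$, and let $\beta_a,\beta_s:\mathbb R\to\mathbb R$ be globally Lipschitz continuous with $\beta_a\ge0$, $\beta_s>0$. Let $\mu\in(\varepsilon_a^{1/4},2^{1/4})$. Then there exists $M_0>0$ such that for every $M_a\ge M_0$ and every initial condition $(T_a^{(0)},T_s^{(0)})\in[0,M_a]\times[0,\mu M_a]$, the solution $(T_a,T_s)$ of \[ \begin{cases} \gamma_a T_a'=-\lambda(T_a-T_s)+\varepsilon_a\sigma_B|T_s|^3T_s-2\varepsilon_a\sigma_B|T_a|^3T_a+q\beta_a(T_a),\\ \gamma_s T_s'=-\lambda(T_s-T_a)-\sigma_B|T_s|^3T_s+\varepsilon_a\sigma_B|T_a|^3T_a+q\beta_s(T_s),\\ T_a(0)=T_a^{(0)},\quad T_s(0)=T_s^{(0)} \end{cases} \] does not leave the rectangle $[0,M_a]\times[0,\mu M_a]$ for positive times. *)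

From Stdlib Require Import Reals.
From Coquelicot Require Import Coquelicot.
Open Scope R_scope.

Definition glob_lipschitz (f : R -> R) : Prop :=
  exists L : R, forall x y : R, Rabs (f x - f y) <= L * Rabs (x - y).

Definition p4 (x : R) : R := Rabs x ^ 3 * x.

Definition rhs_a (lam q sB ea : R) (ba : R -> R) (Ta Ts : R) : R :=
  - lam * (Ta - Ts) + ea * sB * p4 Ts - 2 * ea * sB * p4 Ta + q * ba Ta.

Definition rhs_s (lam q sB ea : R) (bs : R -> R) (Ta Ts : R) : R :=
  - lam * (Ts - Ta) - sB * p4 Ts + ea * sB * p4 Ta + q * bs Ts.

Definition is_solution (ga gs lam q sB ea : R) (ba bs : R -> R)
    (T : R) (Ta Ts : R -> R) : Prop :=
  filterlim Ta (at_right 0) (locally (Ta 0)) /\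
  filterlim Ts (at_right 0) (locally (Ts 0)) /\
  (forall t, 0 < t < T ->
     is_derive Ta t (rhs_a lam q sB ea ba (Ta t) (Ts t) / ga) /\
     is_derive Ts t (rhs_s lam q sB ea bs (Ta t) (Ts t) / gs)).

(* The rectangle [0, M] x [0, mu M] is invariant as soon as the
   vector field points into it along its boundary.  On the edges [Ta = 0] and
   [Ts = 0] this is read off the signs of the terms ([bs > 0] makes the edge
   [Ts = 0] strictly inward).  On the edges [Ta = M] and [Ts = mu M] the quartic
   radiation terms dominate for large [M], since the Lipschitz [ba], [bs] grow at
   most linearly: [mu^4 < 2] gives [2 ea sB M^4 > ea sB (mu M)^4], and
   [ea < mu^4] gives [sB (mu M)^4 > ea sB M^4]. *)

From Stdlib Require Import Reals Lra Psatz Classical.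
From Coquelicot Require Import Coquelicot.
Open Scope R_scope.

Lemma filterlim_le_of_eventually {T} (F : (T -> Prop) -> Prop) {FF : ProperFilter F}
    (f : T -> R) (l c : R) :
  filterlim f F (locally l) -> F (fun t => f t <= c) -> l <= c.
Proof. intros Hf Hc. exact (filterlim_le f (fun _ => c) l c Hc Hf (filterlim_const c)). Qed.

Lemma filterlim_ge_of_eventually {T} (F : (T -> Prop) -> Prop) {FF : ProperFilter F}
    (f : T -> R) (l c : R) :
  filterlim f F (locally l) -> F (fun t => c <= f t) -> c <= l.
Proof. intros Hf Hc. exact (filterlim_le (fun _ => c) f c l Hc (filterlim_const c) Hf). Qed.

Lemma at_right_interval (s : R) (P : R -> Prop) :
  at_right s P <-> exists d, 0 < d /\ forall u, s < u < s + d -> P u.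
Proof.
  split.
  - intros [d Hd]. exists d. split; [apply cond_pos|].
    intros u Hu. apply Hd; [|lra]. change (Rabs (u - s) < d). rewrite Rabs_right; lra.
  - intros [d [Hd HP]]. exists (mkposreal d Hd). intros u Hu Hsu. apply HP.
    change (Rabs (u - s) < d) in Hu. rewrite Rabs_right in Hu; lra.
Qed.

Lemma at_left_interval (s : R) (P : R -> Prop) :
  at_left s P <-> exists d, 0 < d /\ forall u, s - d < u < s -> P u.
Proof.
  split.
  - intros [d Hd]. exists d. split; [apply cond_pos|].
    intros u Hu. apply Hd; [|lra]. change (Rabs (u - s) < d). rewrite Rabs_left; lra.
  - intros [d [Hd HP]]. exists (mkposreal d Hd). intros u Hu Hus. apply HP.
    change (Rabs (u - s) < d) in Hu. rewrite Rabs_left in Hu; lra.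
Qed.

Lemma is_derive_continuous (f : R -> R) (x l : R) : is_derive f x l -> continuous f x.
Proof. intros Hf. apply (@ex_derive_continuous R_AbsRing R_NormedModule). exists l. exact Hf. Qed.

Lemma continuous_at_right (f : R -> R) (x : R) :
  continuous f x -> filterlim f (at_right x) (locally (f x)).
Proof. apply filterlim_filter_le_1, filter_le_within. Qed.

Lemma continuous_at_left (f : R -> R) (x : R) :
  continuous f x -> filterlim f (at_left x) (locally (f x)).
Proof. apply filterlim_filter_le_1, filter_le_within. Qed.

Lemma filterlim_continuous_comp_2 {T} {F : (T -> Prop) -> Prop} {FF : Filter F}
    (u v : T -> R) (h : R -> R -> R) (a b : R) :
  filterlim u F (locally a) -> filterlim v F (locally b) ->
  continuous (fun p : R * R => h (fst p) (snd p)) (a, b) ->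
  filterlim (fun t => h (u t) (v t)) F (locally (h a b)).
Proof.
  intros Hu Hv Hh. apply (filterlim_comp_2 u v h Hu Hv).
  eapply filterlim_filter_le_1; [|exact Hh].
  intros P [e He]. exists (ball a e) (ball b e); try (exists e; auto).
  intros a' b' Ha' Hb'. apply He. split; assumption.
Qed.

Lemma interval_induction (P : R -> Prop) (a b : R) : a <= b -> P a ->
  (forall s, a <= s < b -> (forall u, a <= u <= s -> P u) ->
     exists d, 0 < d /\ forall u, s < u < s + d -> P u) ->
  (forall s, a < s <= b -> (forall u, a <= u < s -> P u) -> P s) ->
  forall u, a <= u <= b -> P u.
Proof.
  intros Hab Ha Hstep Hclosed.
  set (E := fun x => a <= x <= b /\ forall u, a <= u <= x -> P u).
  assert (Ea : E a) by (split; [lra|]; intros u Hu; replace u with a by lra; exact Ha).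
  destruct (completeness E) as [c [Hub Hlub]].
  { exists b. intros x [Hx _]. lra. }
  { exists a. exact Ea. }
  assert (Hac : a <= c) by (apply Hub; exact Ea).
  assert (Hcb : c <= b) by (apply Hlub; intros x [Hx _]; lra).
  assert (Hbelow : forall u, a <= u < c -> P u).
  { intros u Hu. apply NNPP. intros HnP.
    assert (c <= u); [|lra].
    apply Hlub. intros x [_ Hx]. destruct (Rle_lt_dec x u) as [|Hux]; [assumption|].
    exfalso. apply HnP, Hx. lra. }
  assert (Ec : E c).
  { split; [lra|]. intros u Hu. destruct (Req_dec u c) as [->|Huc]; [|apply Hbelow; lra].
    destruct (Req_dec c a) as [->|Hca]; [exact Ha|]. apply Hclosed; [lra|exact Hbelow]. }
  destruct (Req_dec c b) as [<-|Hcb'].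
  - intros u Hu. apply Ec. exact Hu.
  - exfalso. destruct (Hstep c) as [d [Hd Hnext]]; [lra|apply Ec|].
    set (x := Rmin (c + d / 2) b).
    assert (Hx : c < x <= c + d / 2 /\ x <= b)
      by (unfold x; split; [split; [apply Rmin_glb_lt|apply Rmin_l]|apply Rmin_r]; lra).
    assert (Ex : E x).
    { split; [lra|]. intros u Hu. destruct (Rle_lt_dec u c); [apply Ec|apply Hnext]; lra. }
    assert (x <= c) by (apply Hub; exact Ex). lra.
Qed.

Lemma interval_induction_down (P : R -> Prop) (a b : R) : a <= b -> P b ->
  (forall s, a < s <= b -> (forall u, s <= u <= b -> P u) ->
     exists d, 0 < d /\ forall u, s - d < u < s -> P u) ->
  (forall s, a <= s < b -> (forall u, s < u <= b -> P u) -> P s) ->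
  forall u, a <= u <= b -> P u.
Proof.
  intros Hab Hb Hstep Hclosed u Hu.
  replace u with (- - u) by ring.
  apply (interval_induction (fun v => P (- v)) (- b) (- a)); [lra|now rewrite Ropp_involutive| | |lra].
  - intros s Hs Hall. destruct (Hstep (- s)) as [d [Hd HP]]; [lra| |].
    + intros v Hv. replace v with (- - v) by ring. apply Hall. lra.
    + exists d. split; [exact Hd|]. intros v Hv. apply HP. lra.
  - intros s Hs Hall. apply Hclosed; [lra|].
    intros v Hv. replace v with (- - v) by ring. apply Hall. lra.
Qed.

Lemma le_of_is_derive_nonneg (f df : R -> R) (a b : R) : a < b ->
  filterlim f (at_right a) (locally (f a)) ->
  (forall w, a < w <= b -> is_derive f w (df w)) ->
  (forall w, a < w <= b -> 0 <= df w) -> f a <= f b.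
Proof.
  intros Hab Ha Hd Hpos.
  assert (Hinner : forall a', a < a' < b -> f a' <= f b).
  { intros a' Ha'.
    pose proof (MVT_gen f a' b df) as Hmvt. cbv zeta in Hmvt.
    rewrite Rmin_left, Rmax_right in Hmvt by lra.
    destruct Hmvt as [c [Hc Hfc]].
    - intros w Hw. apply Hd. lra.
    - intros w Hw. apply continuity_pt_filterlim, (is_derive_continuous f w (df w)), Hd. lra.
    - assert (0 <= df c) by (apply Hpos; lra). nra. }
  apply (filterlim_le_of_eventually _ f (f a) (f b) Ha), at_right_interval.
  exists (b - a). split; [lra|]. intros u Hu. apply Hinner. lra.
Qed.

(* The values of [f] below [c] can only increase, so going backwards from a
   hypothetical [f b < c] the function stays below [f b], contradicting [c <= f a]. *)
Lemma barrier_above (f df : R -> R) (a b c : R) : a <= b ->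
  filterlim f (at_right a) (locally (f a)) ->
  (forall w, a < w <= b -> is_derive f w (df w)) ->
  c <= f a -> (forall w, a < w <= b -> f w < c -> 0 <= df w) -> c <= f b.
Proof.
  intros Hab Ha Hd Hca Hsign.
  destruct (Rle_lt_dec c (f b)) as [|Hfb]; [assumption|exfalso].
  assert (Hright : forall s, a <= s < b -> filterlim f (at_right s) (locally (f s))).
  { intros s Hs. destruct (Req_dec s a) as [->|Hsa]; [exact Ha|].
    apply continuous_at_right, (is_derive_continuous f s (df s)), Hd. lra. }
  enough (f a <= f b) by lra.
  apply (interval_induction_down (fun u => f u <= f b) a b); [lra|lra| | |lra].
  - intros s Hs Hall.
    assert (Hfs : f s < c) by (specialize (Hall s ltac:(lra)); lra).
    assert (Hleft := continuous_at_left f s (is_derive_continuous f s (df s) (Hd s Hs))).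
    destruct (proj1 (at_left_interval s _) (Hleft _ (open_lt c (f s) Hfs))) as [d [Hd0 Hlt]].
    exists (Rmin d (s - a)). split; [apply Rmin_glb_lt; lra|].
    intros u Hu. pose proof (Rmin_l d (s - a)). pose proof (Rmin_r d (s - a)).
    apply Rle_trans with (f s); [|apply Hall; lra].
    apply (le_of_is_derive_nonneg f df u s); [lra|apply Hright; lra|intros w Hw; apply Hd; lra|].
    intros w Hw. apply Hsign; [lra|].
    destruct (Req_dec w s) as [->|Hws]; [exact Hfs|apply Hlt; lra].
  - intros s Hs Hall.
    apply (filterlim_le_of_eventually _ f (f s) (f b) (Hright s Hs)), at_right_interval.
    exists (b - s). split; [lra|]. intros u Hu. apply Hall. lra.
Qed.

Lemma barrier_below (f df : R -> R) (a b c : R) : a <= b ->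
  filterlim f (at_right a) (locally (f a)) ->
  (forall w, a < w <= b -> is_derive f w (df w)) ->
  f a <= c -> (forall w, a < w <= b -> c < f w -> df w <= 0) -> f b <= c.
Proof.
  intros Hab Ha Hd Hca Hsign.
  enough (- c <= - f b) by lra.
  apply (barrier_above (fun u => - f u) (fun u => - df u) a b (- c)); [lra| | |lra|].
  - exact (filterlim_comp _ _ _ f opp _ _ _ Ha (filterlim_opp (f a))).
  - intros w Hw. exact (is_derive_opp f w (df w) (Hd w Hw)).
  - intros w Hw Hlt. specialize (Hsign w Hw ltac:(lra)). lra.
Qed.

Lemma eventually_ge_at_right (f df : R -> R) (s c : R) :
  filterlim f (at_right s) (locally (f s)) ->
  filterlim df (at_right s) (locally (df s)) ->
  at_right s (fun w => is_derive f w (df w)) ->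
  c <= f s -> (f s = c -> 0 < df s) -> at_right s (fun u => c <= f u).
Proof.
  intros Hf Hdf Hd Hcs Hedge.
  destruct (Rle_lt_or_eq_dec c (f s) Hcs) as [Hlt|Heq].
  - apply (filter_imp (fun u => c < f u)); [intros u; lra|].
    exact (Hf _ (open_gt c (f s) Hlt)).
  - assert (Hpos := Hdf _ (open_gt 0 (df s) (Hedge (eq_sym Heq)))).
    destruct (proj1 (at_right_interval s _) (filter_and _ _ Hd Hpos)) as [d [Hd0 Hnear]].
    apply at_right_interval. exists d. split; [exact Hd0|]. intros u Hu. rewrite Heq.
    apply (le_of_is_derive_nonneg f df s u); [lra|exact Hf| |];
      intros w Hw; [|apply Rlt_le]; apply Hnear; lra.
Qed.

Lemma eventually_le_at_right (f df : R -> R) (s c : R) :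
  filterlim f (at_right s) (locally (f s)) ->
  filterlim df (at_right s) (locally (df s)) ->
  at_right s (fun w => is_derive f w (df w)) ->
  f s <= c -> (f s = c -> df s < 0) -> at_right s (fun u => f u <= c).
Proof.
  intros Hf Hdf Hd Hcs Hedge.
  apply (filter_imp (fun u => - c <= - f u)); [intros u; lra|].
  apply (eventually_ge_at_right (fun u => - f u) (fun u => - df u)); [| | |lra|].
  - exact (filterlim_comp _ _ _ f opp _ _ _ Hf (filterlim_opp (f s))).
  - exact (filterlim_comp _ _ _ df opp _ _ _ Hdf (filterlim_opp (df s))).
  - apply (filter_imp (fun w => is_derive f w (df w))); [|exact Hd].
    intros w Hw. exact (is_derive_opp f w (df w) Hw).
  - intros Heq. assert (df s < 0) by (apply Hedge; lra). lra.
Qed.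

(* Only the edges [y = 0] and [y = B] need to be strictly inward, with [fs]
   continuous: this keeps [y] in [[0, B]] for a short time, during which the weak
   sign conditions on [fa] act as a one-dimensional barrier for [x]. *)
Section RectangleInvariance.

Variables (fa fs : R -> R -> R) (A B T : R) (x y : R -> R).

Hypothesis fs_continuous : forall a b, continuous (fun p : R * R => fs (fst p) (snd p)) (a, b).
Hypothesis fa_left : forall a b, a <= 0 -> 0 <= b <= B -> 0 <= fa a b.
Hypothesis fa_right : forall a b, A <= a -> 0 <= b <= B -> fa a b <= 0.
Hypothesis fs_bottom : forall a, 0 <= a <= A -> 0 < fs a 0.
Hypothesis fs_top : forall a, 0 <= a <= A -> fs a B < 0.
Hypothesis x_right0 : filterlim x (at_right 0) (locally (x 0)).
Hypothesis y_right0 : filterlim y (at_right 0) (locally (y 0)).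
Hypothesis xy_derive : forall t, 0 < t < T ->
  is_derive x t (fa (x t) (y t)) /\ is_derive y t (fs (x t) (y t)).

Lemma trajectory_at_right (s : R) : 0 <= s < T ->
  filterlim x (at_right s) (locally (x s)) /\ filterlim y (at_right s) (locally (y s)).
Proof.
  intros Hs. destruct (Req_dec s 0) as [->|Hs0]; [split; assumption|].
  destruct (xy_derive s ltac:(lra)) as [Hx Hy].
  split; eapply continuous_at_right, is_derive_continuous; eassumption.
Qed.

Lemma y_eventually_in_range (s : R) : 0 <= s < T -> 0 <= x s <= A -> 0 <= y s <= B ->
  at_right s (fun u => 0 <= y u <= B).
Proof.
  intros Hs Hxs Hys. destruct (trajectory_at_right s Hs) as [Hx Hy].
  assert (Hg := filterlim_continuous_comp_2 x y fs _ _ Hx Hy (fs_continuous (x s) (y s))).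
  assert (Hd : at_right s (fun w => is_derive y w (fs (x w) (y w)))).
  { apply at_right_interval. exists (T - s). split; [lra|].
    intros w Hw. apply xy_derive. lra. }
  apply filter_and.
  - apply (eventually_ge_at_right y (fun w => fs (x w) (y w))); try assumption; [lra|].
    intros Hy0. rewrite Hy0. apply fs_bottom, Hxs.
  - apply (eventually_le_at_right y (fun w => fs (x w) (y w))); try assumption; [lra|].
    intros HyB. rewrite HyB. apply fs_top, Hxs.
Qed.

Lemma rectangle_eventually (s : R) : 0 <= s < T -> 0 <= x s <= A -> 0 <= y s <= B ->
  exists d, 0 < d /\ forall u, s < u < s + d -> 0 <= x u <= A /\ 0 <= y u <= B.
Proof.
  intros Hs Hxs Hys.
  destruct (proj1 (at_right_interval _ _) (y_eventually_in_range s Hs Hxs Hys)) as [d [Hd Hy]].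
  exists (Rmin d (T - s)). split; [apply Rmin_glb_lt; lra|].
  intros u Hu. pose proof (Rmin_l d (T - s)). pose proof (Rmin_r d (T - s)).
  assert (Hxr := proj1 (trajectory_at_right s Hs)).
  assert (Hxd : forall w, s < w <= u -> is_derive x w (fa (x w) (y w)))
    by (intros w Hw; apply xy_derive; lra).
  split; [split|apply Hy; lra].
  - apply (barrier_above x (fun w => fa (x w) (y w)) s u 0); try assumption; try lra.
    intros w Hw Hneg. apply fa_left; [lra|apply Hy; lra].
  - apply (barrier_below x (fun w => fa (x w) (y w)) s u A); try assumption; try lra.
    intros w Hw Hgt. apply fa_right; [lra|apply Hy; lra].
Qed.

Lemma rectangle_closed (s : R) : 0 < s < T ->
  (forall u, 0 <= u < s -> 0 <= x u <= A /\ 0 <= y u <= B) ->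
  0 <= x s <= A /\ 0 <= y s <= B.
Proof.
  intros Hs Hall. destruct (xy_derive s Hs) as [Hx Hy].
  assert (Hev : at_left s (fun u => 0 <= x u <= A /\ 0 <= y u <= B)).
  { apply at_left_interval. exists s. split; [lra|]. intros u Hu. apply Hall. lra. }
  assert (Lx := continuous_at_left x s (is_derive_continuous _ _ _ Hx)).
  assert (Ly := continuous_at_left y s (is_derive_continuous _ _ _ Hy)).
  repeat split;
    [ apply (filterlim_ge_of_eventually _ x _ _ Lx)
    | apply (filterlim_le_of_eventually _ x _ _ Lx)
    | apply (filterlim_ge_of_eventually _ y _ _ Ly)
    | apply (filterlim_le_of_eventually _ y _ _ Ly) ];
    (eapply filter_imp; [|exact Hev]); intros u; tauto.
Qed.

Lemma rectangle_invariant : 0 <= x 0 <= A -> 0 <= y 0 <= B ->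
  forall t, 0 <= t < T -> 0 <= x t <= A /\ 0 <= y t <= B.
Proof.
  intros Hx0 Hy0 t Ht.
  apply (interval_induction (fun u => 0 <= x u <= A /\ 0 <= y u <= B) 0 t); [lra|tauto| | |lra].
  - intros s Hs Hall. destruct (Hall s ltac:(lra)).
    apply rectangle_eventually; [lra|assumption|assumption].
  - intros s Hs Hall. apply rectangle_closed; [lra|]. intros u Hu. apply Hall. lra.
Qed.

End RectangleInvariance.

Lemma pow4_lt (x y : R) : 0 <= x < y -> x ^ 4 < y ^ 4.
Proof. intros Hxy. assert (x * x < y * y) by nra. nra. Qed.

Lemma Rpower_quarter_pow4 (a : R) : 0 < a -> Rpower a (1 / 4) ^ 4 = a.
Proof.
  intros Ha. rewrite <- Rpower_pow by apply exp_pos.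
  rewrite Rpower_mult. replace (1 / 4 * INR 4) with 1 by (simpl; field).
  apply Rpower_1. exact Ha.
Qed.

Lemma affine_lt_quartic (a b c : R) : 0 < c ->
  exists K, forall z, K <= z -> a * z + b < c * z ^ 4.
Proof.
  intros Hc. exists (1 + (Rabs a + Rabs b) / c). intros z Hz.
  assert (Hab : 0 <= (Rabs a + Rabs b) / c)
    by (apply Rdiv_le_0_compat; [pose proof (Rabs_pos a); pose proof (Rabs_pos b); lra|lra]).
  assert (Hz1 : 1 <= z) by lra.
  assert (Hlin : Rabs a + Rabs b < c * z).
  { replace (Rabs a + Rabs b) with (c * ((Rabs a + Rabs b) / c)) by (field; lra). nra. }
  assert (Hz4 : z * z <= z ^ 4).
  { replace (z ^ 4) with (z * z * (z * z)) by ring. assert (1 <= z * z) by nra. nra. }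
  assert (a * z <= Rabs a * z) by (apply Rmult_le_compat_r; [lra|apply Rle_abs]).
  assert (b <= Rabs b * z) by (pose proof (Rle_abs b); pose proof (Rabs_pos b); nra).
  assert ((Rabs a + Rabs b) * z < c * z * z) by (apply Rmult_lt_compat_r; lra).
  assert (c * (z * z) <= c * z ^ 4) by (apply Rmult_le_compat_l; lra).
  lra.
Qed.

Lemma glob_lipschitz_le_affine (f : R -> R) : glob_lipschitz f ->
  exists L, 0 <= L /\ forall x, f x <= f 0 + L * Rabs x.
Proof.
  intros [L HL]. exists (Rabs L). split; [apply Rabs_pos|]. intros x.
  specialize (HL x 0). rewrite Rminus_0_r in HL.
  pose proof (Rle_abs (f x - f 0)). pose proof (Rabs_pos x).
  assert (L * Rabs x <= Rabs L * Rabs x) by (apply Rmult_le_compat_r; [assumption|apply Rle_abs]).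
  lra.
Qed.

Lemma glob_lipschitz_continuous (f : R -> R) : glob_lipschitz f -> forall x, continuous f x.
Proof.
  intros [L HL] x. apply filterlim_locally. intros eps.
  set (d := eps / (Rabs L + 1)).
  assert (HL1 : 0 < Rabs L + 1) by (pose proof (Rabs_pos L); lra).
  assert (Hd : 0 < d) by (apply Rdiv_lt_0_compat; [apply cond_pos|exact HL1]).
  assert (Heps : pos eps = (Rabs L + 1) * d) by (unfold d; field; lra).
  exists (mkposreal d Hd). intros z Hz.
  change (Rabs (z - x) < d) in Hz. change (Rabs (f z - f x) < eps).
  assert (L * Rabs (z - x) <= Rabs L * Rabs (z - x))
    by (apply Rmult_le_compat_r; [apply Rabs_pos|apply Rle_abs]).
  assert (Rabs L * Rabs (z - x) <= Rabs L * d)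
    by (apply Rmult_le_compat_l; [apply Rabs_pos|lra]).
  pose proof (HL z x). lra.
Qed.

Ltac continuity_step :=
  match goal with
  | |- continuous (fun _ => Rplus _ _) _ =>
      apply (continuous_plus (K := R_AbsRing) (V := R_NormedModule))
  | |- continuous (fun _ => Rminus _ _) _ =>
      apply (continuous_minus (K := R_AbsRing) (V := R_NormedModule))
  | |- continuous (fun _ => Rmult _ _) _ => apply (continuous_mult (K := R_AbsRing))
  | |- continuous Rabs _ => apply continuous_Rabs
  | |- continuous fst _ => apply continuous_fst
  | |- continuous snd _ => apply continuous_snd
  | |- continuous (fun x => x) _ => apply continuous_id
  | |- continuous (fun _ => _) _ => apply continuous_const
  end.

Lemma continuous_p4 (x : R) : continuous p4 x.
Proof.
  apply (continuous_ext (fun x => Rabs x * (Rabs x * (Rabs x * 1)) * x)); [reflexivity|].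
  repeat continuity_step.
Qed.

Lemma continuous_rhs_s (lam q sB ea : R) (bs : R -> R) : (forall x, continuous bs x) ->
  forall a b, continuous (fun p : R * R => rhs_s lam q sB ea bs (fst p) (snd p)) (a, b).
Proof.
  intros Hbs a b. unfold rhs_s.
  repeat first [ continuity_step
               | apply (continuous_comp _ p4); [|apply continuous_p4]
               | apply (continuous_comp _ bs); [|apply Hbs] ].
Qed.

Lemma p4_of_nonneg (x : R) : 0 <= x -> p4 x = x ^ 4.
Proof. intros Hx. unfold p4. rewrite Rabs_right by lra. ring. Qed.

Lemma p4_le_pow4 (x z : R) : x <= z -> 0 <= z -> p4 x <= z ^ 4.
Proof.
  intros Hxz Hz. destruct (Rle_lt_dec x 0) as [Hx|Hx].
  - unfold p4. pose proof (pow_le (Rabs x) 3 (Rabs_pos x)). pose proof (pow_le z 4 Hz). nra.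
  - rewrite p4_of_nonneg by lra. apply pow_incr. lra.
Qed.

Lemma p4_nonpos (x : R) : x <= 0 -> p4 x <= 0.
Proof. intros Hx. unfold p4. pose proof (pow_le (Rabs x) 3 (Rabs_pos x)). nra. Qed.

Lemma rhs_a_nonneg (lam q sB ea : R) (ba : R -> R) (a b : R) :
  0 <= lam -> 0 <= q -> 0 <= sB -> 0 <= ea -> 0 <= ba a -> a <= 0 -> 0 <= b ->
  0 <= rhs_a lam q sB ea ba a b.
Proof.
  intros Hlam Hq HsB Hea Hba Ha Hb. unfold rhs_a.
  pose proof (p4_nonpos a Ha). rewrite (p4_of_nonneg b Hb).
  pose proof (pow_le b 4 Hb). assert (0 <= ea * sB) by nra. nra.
Qed.

Lemma rhs_s_pos (lam q sB ea : R) (bs : R -> R) (a : R) :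
  0 <= lam -> 0 < q -> 0 <= sB -> 0 <= ea -> 0 < bs 0 -> 0 <= a ->
  0 < rhs_s lam q sB ea bs a 0.
Proof.
  intros Hlam Hq HsB Hea Hbs Ha. unfold rhs_s.
  rewrite (p4_of_nonneg a Ha), (p4_of_nonneg 0) by lra.
  pose proof (pow_le a 4 Ha). assert (0 <= ea * sB) by nra. nra.
Qed.

Lemma rhs_a_neg_far (lam q sB ea mu : R) (ba : R -> R) :
  0 <= lam -> 0 <= q -> 0 < sB -> 0 < ea -> 0 <= mu -> mu ^ 4 < 2 -> glob_lipschitz ba ->
  exists K, forall a b, K <= a -> 0 <= b <= mu * a -> rhs_a lam q sB ea ba a b < 0.
Proof.
  intros Hlam Hq HsB Hea Hmu Hmu4 Hba.
  destruct (glob_lipschitz_le_affine ba Hba) as [L [HL HbaL]].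
  destruct (affine_lt_quartic (lam * mu + q * L) (q * ba 0) (ea * sB * (2 - mu ^ 4)))
    as [K HK]; [apply Rmult_lt_0_compat; nra|].
  exists (Rmax 0 K). intros a b Ha Hb.
  pose proof (Rmax_l 0 K). pose proof (Rmax_r 0 K).
  specialize (HK a ltac:(lra)). specialize (HbaL a). rewrite Rabs_right in HbaL by lra.
  assert (Hb4 : p4 b <= mu ^ 4 * a ^ 4)
    by (rewrite <- Rpow_mult_distr; apply p4_le_pow4; nra).
  unfold rhs_a. rewrite (p4_of_nonneg a) by lra.
  assert (ea * sB * p4 b <= ea * sB * (mu ^ 4 * a ^ 4))
    by (apply Rmult_le_compat_l; [nra|exact Hb4]).
  assert (lam * b <= lam * (mu * a)) by (apply Rmult_le_compat_l; lra).
  assert (q * ba a <= q * (ba 0 + L * a)) by (apply Rmult_le_compat_l; lra).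
  assert (0 <= lam * a) by nra.
  nra.
Qed.

Lemma rhs_s_neg_far (lam q sB ea mu : R) (bs : R -> R) :
  0 <= lam -> 0 <= q -> 0 < sB -> 0 <= ea -> 0 <= mu -> ea < mu ^ 4 -> glob_lipschitz bs ->
  exists K, forall a M, K <= M -> 0 <= a <= M -> rhs_s lam q sB ea bs a (mu * M) < 0.
Proof.
  intros Hlam Hq HsB Hea Hmu Hmu4 Hbs.
  destruct (glob_lipschitz_le_affine bs Hbs) as [L [HL HbsL]].
  destruct (affine_lt_quartic (lam + q * L * mu) (q * bs 0) (sB * (mu ^ 4 - ea)))
    as [K HK]; [apply Rmult_lt_0_compat; lra|].
  exists (Rmax 0 K). intros a M HM Ha.
  pose proof (Rmax_l 0 K). pose proof (Rmax_r 0 K).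
  specialize (HK M ltac:(lra)). specialize (HbsL (mu * M)).
  rewrite Rabs_right in HbsL by nra.
  unfold rhs_s. rewrite (p4_of_nonneg a), (p4_of_nonneg (mu * M)) by nra.
  rewrite Rpow_mult_distr.
  assert (ea * sB * a ^ 4 <= ea * sB * M ^ 4)
    by (apply Rmult_le_compat_l; [nra|apply pow_incr; lra]).
  assert (q * bs (mu * M) <= q * (bs 0 + L * (mu * M))) by (apply Rmult_le_compat_l; lra).
  assert (lam * a <= lam * M) by (apply Rmult_le_compat_l; lra).
  assert (0 <= lam * (mu * M)) by (apply Rmult_le_pos; nra).
  nra.
Qed.

Theorem lemma4p2 (ga gs lam q sB ea mu : R) (ba bs : R -> R) :
  0 < ga -> 0 < gs -> 0 <= lam -> 0 < q -> 0 < sB -> 0 < ea < 2 ->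
  glob_lipschitz ba -> glob_lipschitz bs ->
  (forall x, 0 <= ba x) -> (forall x, 0 < bs x) ->
  Rpower ea (1/4) < mu < Rpower 2 (1/4) ->
  exists M0 : R, 0 < M0 /\
    forall Ma : R, M0 <= Ma ->
    forall (Ta Ts : R -> R) (T : R), 0 < T ->
      0 <= Ta 0 <= Ma -> 0 <= Ts 0 <= mu * Ma ->
      is_solution ga gs lam q sB ea ba bs T Ta Ts ->
      forall t, 0 <= t < T -> 0 <= Ta t <= Ma /\ 0 <= Ts t <= mu * Ma.
Proof.
  intros Hga Hgs Hlam Hq HsB Hea Hbal Hbsl Hba Hbs Hmu.
  assert (Hroot : 0 < Rpower ea (1 / 4)) by apply exp_pos.
  assert (Hmu_lo : ea < mu ^ 4)
    by (rewrite <- (Rpower_quarter_pow4 ea) by lra; apply pow4_lt; lra).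
  assert (Hmu_hi : mu ^ 4 < 2)
    by (rewrite <- (Rpower_quarter_pow4 2) by lra; apply pow4_lt; lra).
  destruct (rhs_a_neg_far lam q sB ea mu ba) as [Ka HKa]; try lra; [assumption|].
  destruct (rhs_s_neg_far lam q sB ea mu bs) as [Ks HKs]; try lra; [assumption|].
  exists (Rmax 1 (Rmax Ka Ks)). split; [pose proof (Rmax_l 1 (Rmax Ka Ks)); lra|].
  intros Ma HM Ta Ts T HT HTa0 HTs0 [HTa_right [HTs_right Hderiv]].
  pose proof (Rmax_l 1 (Rmax Ka Ks)). pose proof (Rmax_r 1 (Rmax Ka Ks)).
  pose proof (Rmax_l Ka Ks). pose proof (Rmax_r Ka Ks).
  apply (rectangle_invariant (fun a b => rhs_a lam q sB ea ba a b / ga)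
           (fun a b => rhs_s lam q sB ea bs a b / gs) Ma (mu * Ma) T Ta Ts); try assumption.
  - intros a b. unfold Rdiv. apply (continuous_mult (K := R_AbsRing)).
    + apply continuous_rhs_s, glob_lipschitz_continuous, Hbsl.
    + apply continuous_const.
  - intros a b Ha Hb. apply Rdiv_le_0_compat; [apply rhs_a_nonneg; auto; lra|lra].
  - intros a b Ha Hb. apply Rlt_le, Rdiv_neg_pos; [apply HKa; nra|lra].
  - intros a Ha. apply Rdiv_lt_0_compat; [apply rhs_s_pos; auto; lra|lra].
  - intros a Ha. apply Rdiv_neg_pos; [apply HKs; lra|lra].
Qed.
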